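(* For every integer $n\ge 0$, $$\Phi^{(2)}[a; bq^n, b'; c, c'; x, y] = \sum_{k=0}^n \begin{bmatrix} n \\ k \end{bmatrix} q^{2\binom{k}{2}} \frac{(bx)^k (a; q)_k}{(c; q)_k} \Phi^{(2)}[aq^k; bq^k, b'; cq^k, c'; x, y]$$ and $$\Phi^{(2)}[a; bq^{-n}, b'; c, c'; x, y] = \sum_{k=0}^n \begin{bmatrix} n \\ k \end{bmatrix} q^{\binom{k}{2} - nk} \frac{(-bx)^k (a; q)_k}{(c; q)_k} \Phi^{(2)}[aq^k; b, b'; cq^k, c'; x, y].$$
   Context: Let $q$ be a complex number with $0<|q|<1$. For complex $z$ and integer $m\ge 0$, $(z;q)_m=\prod_{j=0}^{m-1}(1-zq^j)$, with $(z;q)_0=1$. For integers $0\le k\le n$, $\begin{bmatrix} n \\ k \end{bmatrix}=\frac{(q;q)_n}{(q;q)_k(q;q)_{n-k}}$ is the $q$-binomial coefficient. The $q$-Appell function $\Phi^{(2)}$ is $$\Phi^{(2)}[a; b, b'; c, c'; x, y] = \sum_{m, n \geq 0} \frac{(a; q)_{m+n} (b; q)_m (b'; q)_n}{(q; q)_m (q; q)_n (c; q)_m (c'; q)_n} x^m y^n.$$ Identities are understood as identities of power series in $x,y$ (formal, or convergent for small $|x|,|y|$), with complex parameters chosen so that no denominator occurring vanishes. *)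

From HB Require Import structures.
From mathcomp Require Import all_boot all_order all_algebra.
From mathcomp Require Import complex.
From mathcomp Require Import reals.
Set Implicit Arguments. Unset Strict Implicit. Unset Printing Implicit Defensive.
Import Order.TTheory GRing.Theory Num.Theory.
Local Open Scope ring_scope.
Local Open Scope complex_scope.

Section Defs.
Variable R : realType.
Local Notation C := R[i].

Definition qpoch (z q : C) (m : nat) : C := \prod_(j < m) (1 - z * q ^+ j).

Definition qbinom (q : C) (n k : nat) : C :=
  qpoch q q n / (qpoch q q k * qpoch q q (n - k)).

(** formal power series in x,y : coefficient of x^m y^l *)
Definition fps2 := nat -> nat -> C.

Definition Phi2 (q a b b' c c' : C) : fps2 := fun m l =>
  qpoch a q (m + l) * qpoch b q m * qpoch b' q l /
  (qpoch q q m * qpoch q q l * qpoch c q m * qpoch c' q l).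

Definition fps2_scale (s : C) (F : fps2) : fps2 := fun m l => s * F m l.

Definition fps2_mulX (k : nat) (F : fps2) : fps2 :=
  fun m l => if (k <= m)%N then F (m - k)%N l else 0.

Definition fps2_sum (n : nat) (G : nat -> fps2) : fps2 :=
  fun m l => \sum_(k < n.+1) G k m l.
End Defs.

From HB Require Import structures.
From mathcomp Require Import all_boot all_order all_algebra.
From mathcomp Require Import complex.
From mathcomp Require Import reals.
From mathcomp Require Import ring.
From Stdlib Require Import FunctionalExtensionality.
Set Implicit Arguments. Unset Strict Implicit. Unset Printing Implicit Defensive.
Import Order.TTheory GRing.Theory Num.Theory.
Local Open Scope ring_scope.
Local Open Scope complex_scope.

(* In the coefficient of x^m y^l of Phi2 the parameter b only occurs through
   (b;q)_m/(q;q)_m, the x^m-coefficient of the one-variable series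
   (bx;q)_oo/(x;q)_oo.  Both identities are therefore expansions of that
   series: from (bx;q)_oo = (1 - bx) (bqx;q)_oo and the two q-Pascal rules one
   gets by induction on n
     (bq^n x;q)_oo/(x;q)_oo = sum_k [n,k] q^(2 C(k,2)) (bx)^k (bq^k x;q)_oo/(x;q)_oo,
     (bx;q)_oo/(x;q)_oo     = sum_k [n,k] q^C(k,2) (-bx)^k (bq^n x;q)_oo/(x;q)_oo.
   The second identity uses the latter with b replaced by bq^-n.
   Multiplying back by the remaining factors and splitting
   (a;q)_(m+l) = (a;q)_k (aq^k;q)_(m-k+l), (c;q)_m = (c;q)_k (cq^k;q)_(m-k)
   turns each x^k-shifted term into the Phi2 with parameters aq^k and cq^k. *)

Section QPochhammer.
Variables (R : realType) (q : R[i]).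

Lemma qpoch0 z : qpoch z q 0 = 1.
Proof. by rewrite /qpoch big_ord0. Qed.

Lemma qpochS z m : qpoch z q m.+1 = qpoch z q m * (1 - z * q ^+ m).
Proof. by rewrite /qpoch big_ord_recr. Qed.

Lemma qpochSl z m : qpoch z q m.+1 = (1 - z) * qpoch (z * q) q m.
Proof.
rewrite /qpoch big_ord_recl /= expr0 mulr1; congr (_ * _).
by apply: eq_bigr => i _; rewrite /bump /= add1n exprS mulrA.
Qed.

Lemma qpochD z k j : qpoch z q (k + j) = qpoch z q k * qpoch (z * q ^+ k) q j.
Proof.
elim: j => [|j IHj]; first by rewrite addn0 qpoch0 mulr1.
by rewrite addnS !qpochS IHj exprD !mulrA.
Qed.

Lemma qpoch_qq_neq0 m : `|q| < 1 -> qpoch q q m != 0.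
Proof.
move=> q_lt1; elim: m => [|m IHm]; first by rewrite qpoch0 oner_neq0.
rewrite qpochS mulf_neq0 // -exprS subr_eq0; apply/eqP => qX1.
have : `|q ^+ m.+1| < 1 by rewrite normrX exprn_ilt1 // ltW.
by rewrite -qX1 normr1 ltxx.
Qed.

End QPochhammer.

Section QBinomialSeries.
Variables (R : realType) (q : R[i]).
Hypothesis qq_neq0 : forall m, qpoch q q m != 0.

Lemma onesub_qexpS_neq0 j : 1 - q * q ^+ j != 0.
Proof. by have := qq_neq0 j.+1; rewrite qpochS mulf_eq0 negb_or => /andP[]. Qed.

(* [qbin_series z] lists the coefficients of (zx;q)_oo/(x;q)_oo, and
   [qbin_seriesX z k] those of x^k (zx;q)_oo/(x;q)_oo. *)
Definition qbin_series z m := qpoch z q m / qpoch q q m.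

Definition qbin_seriesX z k m := if (k <= m)%N then qbin_series z (m - k) else 0.

Lemma qbin_seriesS z j :
  qbin_series z j.+1 = qbin_series (z * q) j.+1 - z * qbin_series (z * q) j.
Proof.
rewrite /qbin_series qpochSl !qpochS.
by field; rewrite qq_neq0 onesub_qexpS_neq0.
Qed.

(* (zx;q)_oo = (1 - zx) (zqx;q)_oo *)
Lemma qbin_seriesX_shift z k m :
  qbin_seriesX z k m = qbin_seriesX (z * q) k m - z * qbin_seriesX (z * q) k.+1 m.
Proof.
rewrite /qbin_seriesX; case: (leqP k m) => [le_km|lt_mk]; last first.
  by rewrite ltnNge ltnW // mulr0 subr0.
case: (leqP k.+1 m) => [lt_km|le_mk]; first by rewrite -(subnSK lt_km) qbin_seriesS.
have -> : k = m by apply/eqP; rewrite eqn_leq le_km -ltnS.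
by rewrite subnn /qbin_series !qpoch0 mulr0 subr0.
Qed.

Definition qbinz n k := if (k <= n)%N then qbinom q n k else 0.

Lemma qbinom_nn n : qbinom q n n = 1.
Proof. by rewrite /qbinom subnn qpoch0 mulr1 divff. Qed.

Lemma qbinz_n0 n : qbinz n 0 = 1.
Proof. by rewrite /qbinz /qbinom qpoch0 subn0 mul1r divff. Qed.

Lemma qbinz_gt n k : (n < k)%N -> qbinz n k = 0.
Proof. by rewrite /qbinz ltnNge => /negbTE ->. Qed.

Lemma qbinz_ord n (k : 'I_n.+1) : qbinz n k = qbinom q n k.
Proof. by rewrite /qbinz -ltnS ltn_ord. Qed.

Lemma qbinom_pascal_factors k r :
  [/\ qbinom q (k.+1 + r).+1 k.+1 =
      qpoch q q (k.+1 + r) * (1 - q * (q * q ^+ k * q ^+ r)) /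
      (qpoch q q k * (1 - q * q ^+ k) * (qpoch q q r * (1 - q * q ^+ r))),
      qbinom q (k.+1 + r) k =
      qpoch q q (k.+1 + r) / (qpoch q q k * (qpoch q q r * (1 - q * q ^+ r)))
    & qbinom q (k.+1 + r) k.+1 =
      qpoch q q (k.+1 + r) / (qpoch q q k * (1 - q * q ^+ k) * qpoch q q r)].
Proof.
have qbinomD i j : qbinom q (i + j) i = qpoch q q (i + j) / (qpoch q q i * qpoch q q j).
  by rewrite /qbinom addKn.
split.
- by rewrite -addnS qbinomD addnS !qpochS exprD exprS.
- by rewrite addSnnS qbinomD -addSnnS qpochS.
- by rewrite qbinomD qpochS.
Qed.

Lemma qbinz_pascal n k : qbinz n.+1 k.+1 = qbinz n k + q ^+ k.+1 * qbinz n k.+1.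
Proof.
rewrite /qbinz ltnS; case: (leqP k n) => [le_kn|lt_nk]; last first.
  by rewrite ltnNge (ltnW lt_nk) /= mulr0 addr0.
case: (leqP k.+1 n) => [lt_kn|le_nk]; last first.
  have -> : k = n by apply/eqP; rewrite eqn_leq le_kn -ltnS.
  by rewrite mulr0 addr0 !qbinom_nn.
rewrite -(subnKC lt_kn); set r := (n - k.+1)%N.
have [-> -> ->] := qbinom_pascal_factors k r.
by rewrite exprS; field; rewrite !(qq_neq0, onesub_qexpS_neq0).
Qed.

Lemma qbinz_pascal_rev n k : qbinz n.+1 k.+1 = qbinz n k.+1 + q ^+ (n - k) * qbinz n k.
Proof.
rewrite /qbinz ltnS; case: (leqP k n) => [le_kn|lt_nk]; last first.
  by rewrite ltnNge (ltnW lt_nk) /= mulr0 addr0.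
case: (leqP k.+1 n) => [lt_kn|le_nk]; last first.
  have -> : k = n by apply/eqP; rewrite eqn_leq le_kn -ltnS.
  by rewrite subnn expr0 mul1r add0r !qbinom_nn.
rewrite -(subnKC lt_kn); set r := (n - k.+1)%N.
have [-> -> ->] := qbinom_pascal_factors k r.
by rewrite addSnnS addKn exprS; field; rewrite !(qq_neq0, onesub_qexpS_neq0).
Qed.

Lemma sum_qbinzS n (F : nat -> R[i]) :
  \sum_(0 <= k < n.+2) qbinz n.+1 k * F k =
  \sum_(0 <= k < n.+1) (q ^+ k * qbinz n k * F k + qbinz n k * F k.+1).
Proof.
rewrite big_split /= big_nat_recl // qbinz_n0 mul1r.
under eq_big_nat => i _ do rewrite qbinz_pascal mulrDl.
rewrite big_split /= addrCA addrC; congr (_ + _).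
rewrite [RHS]big_nat_recl // expr0 mul1r qbinz_n0 mul1r; congr (_ + _).
by rewrite big_nat_recr //= qbinz_gt // mulr0 mul0r addr0.
Qed.

Lemma sum_qbinzS_rev n (F : nat -> R[i]) :
  \sum_(0 <= k < n.+2) qbinz n.+1 k * F k =
  \sum_(0 <= k < n.+1) (qbinz n k * F k + q ^+ (n - k) * qbinz n k * F k.+1).
Proof.
rewrite big_split /= big_nat_recl // qbinz_n0 mul1r.
under eq_big_nat => i _ do rewrite qbinz_pascal_rev mulrDl.
rewrite big_split /= addrA; congr (_ + _).
by rewrite [RHS]big_nat_recl // qbinz_n0 mul1r big_nat_recr //= qbinz_gt // mul0r addr0.
Qed.

Lemma qbin_series_expand_up n b m :
  qbin_series (b * q ^+ n) m =
  \sum_(0 <= k < n.+1) qbinz n k * q ^+ (2 * 'C(k, 2)) * b ^+ k * qbin_seriesX (b * q ^+ k) k m.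
Proof.
elim: n b => [|n IHn] b.
  by rewrite big_nat1 qbinz_n0 /qbin_seriesX /= subn0 !expr0 !mul1r.
under eq_big_nat => k _ do rewrite -!mulrA.
rewrite sum_qbinzS exprS mulrA IHn; apply: eq_big_nat => k _.
rewrite (qbin_seriesX_shift (b * q ^+ k)) binS bin1 mulnDr exprD !exprS !mulrA.
have -> : b * q * q ^+ k = b * q ^+ k * q by rewrite -!mulrA (mulrC q).
by rewrite exprMn (mul2n k) -addnn exprD; ring.
Qed.

Lemma qbin_series_expand_down n b m :
  qbin_series b m =
  \sum_(0 <= k < n.+1) qbinz n k * q ^+ 'C(k, 2) * (- b) ^+ k * qbin_seriesX (b * q ^+ n) k m.
Proof.
elim: n b => [|n IHn] b.
  by rewrite big_nat1 qbinz_n0 /qbin_seriesX /= subn0 !expr0 !mul1r mulr1.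
under eq_big_nat => k _ do rewrite -!mulrA.
rewrite sum_qbinzS_rev IHn; apply: eq_big_nat => k /andP[_ lt_kn].
rewrite (qbin_seriesX_shift (b * q ^+ n)) binS bin1 exprD !exprS !mulrA.
have -> : b * q * q ^+ n = b * q ^+ n * q by rewrite -!mulrA (mulrC q).
have -> : q ^+ n = q ^+ (n - k) * q ^+ k by rewrite -exprD subnK.
by ring.
Qed.

End QBinomialSeries.

Section Phi2Expansion.
Variables (R : realType) (q a b' c c' : R[i]).
Hypothesis qq_neq0 : forall m, qpoch q q m != 0.
Hypothesis c_neq0 : forall m, qpoch c q m != 0.
Hypothesis c'_neq0 : forall m, qpoch c' q m != 0.

Definition Phi2_cofactor m l :=
  qpoch a q (m + l) * qpoch b' q l / (qpoch q q l * qpoch c q m * qpoch c' q l).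

Lemma Phi2E b m l : Phi2 q a b b' c c' m l = Phi2_cofactor m l * qbin_series q b m.
Proof.
rewrite /Phi2 /Phi2_cofactor /qbin_series.
by field; rewrite !(qq_neq0, c_neq0, c'_neq0).
Qed.

Lemma Phi2_mulXE b s k m l :
  s * qpoch a q k / qpoch c q k * fps2_mulX k (Phi2 q (a * q ^+ k) b b' (c * q ^+ k) c') m l
  = Phi2_cofactor m l * (s * qbin_seriesX q b k m).
Proof.
rewrite /fps2_mulX /qbin_seriesX; case: (leqP k m) => [le_km|_]; last by rewrite !mulr0.
rewrite -(subnKC le_km) addKn /Phi2 /Phi2_cofactor /qbin_series -addnA !qpochD.
have /andP[ck_neq0 cqk_neq0] : (qpoch c q k != 0) && (qpoch (c * q ^+ k) q (m - k) != 0).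
  by have := c_neq0 (k + (m - k)); rewrite qpochD mulf_eq0 negb_or.
by field; rewrite ck_neq0 cqk_neq0 !(qq_neq0, c'_neq0).
Qed.

Lemma Phi2_expand n b (be s : nat -> R[i]) :
  (forall m, qbin_series q b m = \sum_(k < n.+1) s k * qbin_seriesX q (be k) k m) ->
  Phi2 q a b b' c c'
    = fps2_sum n (fun k => fps2_scale (s k * qpoch a q k / qpoch c q k)
        (fps2_mulX k (Phi2 q (a * q ^+ k) (be k) b' (c * q ^+ k) c'))).
Proof.
move=> b_expand; apply: functional_extensionality => m.
apply: functional_extensionality => l.
rewrite /fps2_sum /fps2_scale Phi2E b_expand mulr_sumr.
by apply: eq_bigr => k _; rewrite Phi2_mulXE.
Qed.

End Phi2Expansion.

Theorem theorem9 (R : realType) (q a b b' c c' : R[i]) (n : nat) :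
  0 < `|q| -> `|q| < 1 ->
  (forall m : nat, qpoch c q m != 0) ->
  (forall m : nat, qpoch c' q m != 0) ->
  Phi2 q a (b * q ^+ n) b' c c'
    = fps2_sum n (fun k =>
        fps2_scale (qbinom q n k * q ^+ (2 * 'C(k, 2)) * b ^+ k
                    * qpoch a q k / qpoch c q k)
          (fps2_mulX k (Phi2 q (a * q ^+ k) (b * q ^+ k) b' (c * q ^+ k) c')))
  /\
  Phi2 q a (b * q ^- n) b' c c'
    = fps2_sum n (fun k =>
        fps2_scale (qbinom q n k * q ^ ('C(k, 2)%:Z - (n * k)%:Z) * (- b) ^+ k
                    * qpoch a q k / qpoch c q k)
          (fps2_mulX k (Phi2 q (a * q ^+ k) b b' (c * q ^+ k) c'))).
Proof.
move=> q_gt0 q_lt1 c_neq0 c'_neq0.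
have qq_neq0 m := qpoch_qq_neq0 m q_lt1.
have q_neq0 : q != 0 by rewrite -normr_gt0.
split; apply: Phi2_expand => // m.
- rewrite (qbin_series_expand_up qq_neq0) big_mkord.
  by apply: eq_bigr => k _; rewrite qbinz_ord.
- rewrite (qbin_series_expand_down qq_neq0 n) mulfVK ?expf_neq0 // big_mkord.
  apply: eq_bigr => k _; rewrite qbinz_ord; congr (_ * _).
  rewrite expfzDr // -exprnN -exprnP exprM -mulNr exprMn exprVn.
  by rewrite [(- b) ^+ k / _]mulrC !mulrA.
Qed.
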